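(* Let $\mathcal{R}$ be a left-connected rewriting system over a signature $\Sigma$, let $\rho_1 = (L_1 \leftarrow I_1+O_1 \rightarrow R_1)$ and $\rho_2 = (L_2 \leftarrow I_2+O_2 \rightarrow R_2)$ be rules of $\mathcal{R}$, and let $(g_1, g_2 \colon G \to L_1 + L_2)$ be a gluing scheme. If two distinct nodes that both belong to $L_1$ (respectively, both belong to $L_2$) are glued, then the gluing scheme does not yield a pre-critical pair. Likewise, if two distinct hyperedges that both belong to $L_1$ (respectively, both belong to $L_2$) are glued, then the gluing scheme does not yield a pre-critical pair.
   Context: A signature $\Sigma$ is a set of triples $(x,n,m)$ (label $x$, arity $n$, coarity $m$). A $\Sigma$-hypergraph $G=(V,E,s,t,l)$ consists of finite sets $V$ (nodes) and $E$ (hyperedges), maps $s,t\colon E\to V^*$ (lists of source and target nodes) and a labelling $l\colon E\to\Sigma$ sending a hyperedge with $n$ sources and $m$ targets to a triple of the form $(x,n,m)$. A morphism $f=(f_V,f_E)$ of $\Sigma$-hypergraphs satisfies $f_V^*\circ s = s'\circ f_E$, $f_V^*\circ t=t'\circ f_E$, $l = l'\circ f_E$. These form the category $\mathbf{Hyp}_\Sigma$ (a presheaf category: colimits are computed componentwise on nodes and hyperedges, monos/epis are injective/surjective on both components). Composition of $f\colon A\to B$, $g\colon B\to C$ is written $f;g$; $\iota_1,\iota_2$ are coproduct coprojections. A hypergraph is discrete if it has no hyperedges. A path is a list of hyperedges $[e_1,\dots,e_n]$ such that for each $k$ some target of $e_k$ is a source of $e_{k+1}$; it goes from node $v$ to node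 $v'$ if $v$ is a source of $e_1$ and $v'$ a target of $e_n$; a cycle is a path in which some source of $e_1$ is a target of $e_n$. The in-degree (out-degree) of a node $v$ is the number of pairs $(e,i)$ with $v$ the $i$-th target (source) of $e$; $in(H)$ and $out(H)$ are the sets of nodes of in-degree $0$ and out-degree $0$. $H$ is monogamous acyclic (ma) if it has no cycle and every node has in- and out-degree at most $1$. A cospan $I\xrightarrow{f} H\xleftarrow{g} O$ with $I,O$ discrete is an ma-cospan if $H$ is ma, $f$ is mono with image $in(H)$ and $g$ is mono with image $out(H)$. $H$ is strongly connected if for every $x\in in(H)$, $y\in out(H)$ there is a path from $x$ to $y$. A left-connected rule is a span $L\xleftarrow{[i_L,o_L]} I+O\xrightarrow{[i_R,o_R]} R$ with $I,O$ discrete, $I\xrightarrow{i_L}L\xleftarrow{o_L}O$ and $I\xrightarrow{i_R}R\xleftarrow{o_R}O$ ma-cospans, $[i_L,o_L]$ mono, and $L$ strongly connected; a left-connected rewriting system is a finite set of such rules. A morphism $m\colon L\to G$ is a convex match if it is mono and for any nodes $v,v'$ of $m(L)$ and any path from $v$ to $v'$ in $G$, all hyperedges of the path lie in $m(L)$. A derivation $(n\to G\leftarrow m)\Rrightarrow(n\to H\leftarrow m)$ between ma-cospans via a rule $L\leftarrow K\rightarrow R$ ($K=I+O$) consists of a convex match $L\to G$, a hypergraph $C$ and morphisms $K\to C$, $C\to G$, $C\to H$, $R\to H$, $n+m\to C$ such that $K,L,C,G$ form a pushout square (required also to be a so-called boundary complement), $K,R,C,H$ form a pushout square, and everything commutes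 with the interface maps $n+m\to G$, $n+m\to H$. For left-connected systems it is known that the boundary complement condition is automatic, every mono match is convex, and the pushout complement $C$ exists uniquely for every mono match. Given rules $L_1\leftarrow K_1\to R_1$ and $L_2\leftarrow K_2\to R_2$, a pre-critical pair is a pair of derivations from a common ma-cospan $n\to S\leftarrow m$ with matches $m_1\colon L_1\to S$, $m_2\colon L_2\to S$ such that $[m_1,m_2]\colon L_1+L_2\to S$ is epi. A gluing scheme for $\Sigma$-hypergraphs $L_1,L_2$ is a $\Sigma$-hypergraph $G$ with two morphisms $g_1,g_2\colon G\to L_1+L_2$; its gluing is the coequaliser $\epsilon\colon L_1+L_2\to S:=\mathtt{coeq}(g_1,g_2)$. Two nodes (or two hyperedges) $x,x'$ of $L_1+L_2$ are glued if there is a node (or hyperedge) $y$ of $G$ with $g_1(y)=x$ and $g_2(y)=x'$. The gluing scheme yields a pre-critical pair (for rules with left-hand sides $L_1,L_2$) if the cospan $L_1+L_2\xrightarrow{\epsilon} S\xleftarrow{[\subseteq,\subseteq]} in(S)+out(S)$ determines one, i.e. $\iota_1;\epsilon$ and $\iota_2;\epsilon$ are mono matches and $in(S)\xrightarrow{\subseteq}S\xleftarrow{\subseteq}out(S)$ is an ma-cospan, the two derivations from this ma-cospan being the (unique) ones with matches $\iota_1;\epsilon$ and $\iota_2;\epsilon$. *)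

From Stdlib Require List.
From mathcomp Require Import all_boot.
Set Implicit Arguments. Unset Strict Implicit. Unset Printing Implicit Defensive.

(* A signature: a set of triples (x, n, m); [lbl] is the set of triples,
   [ar]/[coar] give the arity n and coarity m of a triple. *)
Record signature := Signature {
  lbl : Type;
  ar : lbl -> nat;
  coar : lbl -> nat }.

Record hyp (Sg : signature) := Hyp {
  hV : finType;
  hE : finType;
  hs : hE -> seq hV;
  ht : hE -> seq hV;
  hl : hE -> lbl Sg;
  hs_size : forall e, size (hs e) = ar (hl e);
  ht_size : forall e, size (ht e) = coar (hl e) }.

Arguments hs {Sg} h e.
Arguments ht {Sg} h e.
Arguments hl {Sg} h e.

Record hom (Sg : signature) (G H : hyp Sg) := Hom {
  fV : hV G -> hV H;
  fE : hE G -> hE H;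
  hom_s : forall e, map fV (hs G e) = hs H (fE e);
  hom_t : forall e, map fV (ht G e) = ht H (fE e);
  hom_l : forall e, hl H (fE e) = hl G e }.

Arguments fV {Sg G H} h _ : rename.
Arguments fE {Sg G H} h _ : rename.

Section Constructions.
Variable Sg : signature.

Definition comp (A B C : hyp Sg) (f : hom A B) (g : hom B C) : hom A C.
Proof.
refine (@Hom Sg A C (fun v => fV g (fV f v)) (fun e => fE g (fE f e)) _ _ _).
- by move=> e; rewrite (map_comp (fV g) (fV f)) hom_s hom_s.
- by move=> e; rewrite (map_comp (fV g) (fV f)) hom_t hom_t.
- by move=> e; rewrite !hom_l.
Defined.

Definition coprod (A B : hyp Sg) : hyp Sg.
Proof.
refine (@Hyp Sg (hV A + hV B)%type (hE A + hE B)%type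
  (fun e => match e with inl a => map inl (hs A a) | inr b => map inr (hs B b) end)
  (fun e => match e with inl a => map inl (ht A a) | inr b => map inr (ht B b) end)
  (fun e => match e with inl a => hl A a | inr b => hl B b end) _ _).
- by case=> e; rewrite size_map hs_size.
- by case=> e; rewrite size_map ht_size.
Defined.

Definition inj1 (A B : hyp Sg) : hom A (coprod A B).
Proof.
by refine (@Hom Sg A (coprod A B) inl inl _ _ _).
Defined.

Definition inj2 (A B : hyp Sg) : hom B (coprod A B).
Proof.
by refine (@Hom Sg B (coprod A B) inr inr _ _ _).
Defined.

Definition copair (A B C : hyp Sg) (f : hom A C) (g : hom B C) : hom (coprod A B) C.
Proof.
refine (@Hom Sg (coprod A B) C
  (fun v => match v with inl a => fV f a | inr b => fV g b end)
  (fun e => match e with inl a => fE f a | inr b => fE g b end) _ _ _).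
- by case=> e /=; rewrite -map_comp /= ?hom_s //; exact: (hom_s g).
- by case=> e /=; rewrite -map_comp /= ?hom_t //; exact: (hom_t g).
- by case=> e /=; rewrite hom_l.
Defined.

(* Monos (resp. epis) in Hyp_Sigma are the morphisms injective
   (resp. surjective) on both components. *)
Definition mono (A B : hyp Sg) (f : hom A B) : Prop :=
  injective (fV f) /\ injective (fE f).

Definition hom_eq (A B : hyp Sg) (f g : hom A B) : Prop :=
  (forall v, fV f v = fV g v) /\ (forall e, fE f e = fE g e).

Definition is_coeq (G B S : hyp Sg) (g1 g2 : hom G B) (eps : hom B S) : Prop :=
  hom_eq (comp g1 eps) (comp g2 eps) /\
  forall (H : hyp Sg) (h : hom B H), hom_eq (comp g1 h) (comp g2 h) ->
    exists u : hom S H, hom_eq (comp eps u) h /\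
      forall u' : hom S H, hom_eq (comp eps u') h -> hom_eq u' u.

Definition discrete (H : hyp Sg) : Prop := hE H -> False.

Definition indeg (H : hyp Sg) (v : hV H) : nat := \sum_(e : hE H) count_mem v (ht H e).
Definition outdeg (H : hyp Sg) (v : hV H) : nat := \sum_(e : hE H) count_mem v (hs H e).

Definition edge_link (H : hyp Sg) (e e' : hE H) : bool :=
  has (fun v => v \in hs H e') (ht H e).

Definition is_path_from (H : hyp Sg) (v v' : hV H) (p : seq (hE H)) : bool :=
  match p with
  | [::] => false
  | e :: p' => [&& path (@edge_link H) e p', v \in hs H e & v' \in ht H (last e p')]
  end.

Definition is_cycle (H : hyp Sg) (p : seq (hE H)) : bool :=
  match p with
  | [::] => false
  | e :: p' => path (@edge_link H) e p' && has (fun v => v \in ht H (last e p')) (hs H e)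
  end.

Definition ma (H : hyp Sg) : Prop :=
  (forall p, ~~ @is_cycle H p) /\
  (forall v : hV H, indeg v <= 1) /\ (forall v : hV H, outdeg v <= 1).

Definition ma_cospan (I H O : hyp Sg) (f : hom I H) (g : hom O H) : Prop :=
  [/\ discrete I, discrete O, ma H,
      mono f /\ (forall v, (exists i, fV f i = v) <-> indeg v = 0) &
      mono g /\ (forall v, (exists o, fV g o = v) <-> outdeg v = 0)].

Definition strongly_connected (H : hyp Sg) : Prop :=
  forall x y : hV H, indeg x = 0 -> outdeg y = 0 ->
    exists p, is_path_from x y p.

Definition disc (T : finType) : hyp Sg.
Proof.
by refine (@Hyp Sg T void (fun e => match e with end) (fun e => match e with end)
  (fun e => match e with end) _ _); case.
Defined.

Definition in_hyp (H : hyp Sg) : hyp Sg := disc {v : hV H | indeg v == 0}.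
Definition out_hyp (H : hyp Sg) : hyp Sg := disc {v : hV H | outdeg v == 0}.

Definition in_incl (H : hyp Sg) : hom (in_hyp H) H.
Proof. by refine (@Hom Sg (in_hyp H) H val (fun e => match e with end) _ _ _); case. Defined.

Definition out_incl (H : hyp Sg) : hom (out_hyp H) H.
Proof. by refine (@Hom Sg (out_hyp H) H val (fun e => match e with end) _ _ _); case. Defined.

End Constructions.

(* Rules L <- I + O -> R, given by the four components of the two
   copairings [i_L, o_L] and [i_R, o_R]. *)
Record rule (Sg : signature) := Rule {
  rL : hyp Sg; rR : hyp Sg; rI : hyp Sg; rO : hyp Sg;
  iL : hom rI rL; oL : hom rO rL;
  iR : hom rI rR; oR : hom rO rR }.

Definition left_connected (Sg : signature) (r : rule Sg) : Prop :=
  [/\ ma_cospan (iL r) (oL r), ma_cospan (iR r) (oR r),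
      mono (copair (iL r) (oL r)) & strongly_connected (rL r)].

Definition left_connected_system (Sg : signature) (Rs : seq (rule Sg)) : Prop :=
  forall r, List.In r Rs -> left_connected r.

Definition glued_V (Sg : signature) (G B : hyp Sg) (g1 g2 : hom G B) (x x' : hV B) : Prop :=
  exists y, fV g1 y = x /\ fV g2 y = x'.
Definition glued_E (Sg : signature) (G B : hyp Sg) (g1 g2 : hom G B) (x x' : hE B) : Prop :=
  exists y, fE g1 y = x /\ fE g2 y = x'.

Definition yields_precritical (Sg : signature) (L1 L2 S : hyp Sg)
  (eps : hom (coprod L1 L2) S) : Prop :=
  [/\ mono (comp (inj1 L1 L2) eps), mono (comp (inj2 L1 L2) eps)
    & ma_cospan (in_incl S) (out_incl S)].

From Pilot Require Import Defs.
From Stdlib Require List.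
From mathcomp Require Import all_boot.

Set Implicit Arguments.
Unset Strict Implicit.
Unset Printing Implicit Defensive.

(* A coequaliser identifies any two glued elements, so two distinct glued
   elements of the same left-hand side make its match non-injective. *)

Section CoequalisedGluing.
Variables (Sg : signature) (G B S : hyp Sg) (g1 g2 : hom G B) (eps : hom B S).
Hypothesis eps_coequalises : hom_eq (Defs.comp g1 eps) (Defs.comp g2 eps).

Lemma glued_V_coequalised (x x' : hV B) :
  glued_V g1 g2 x x' -> fV eps x = fV eps x'.
Proof. by case=> y [<- <-]; exact: eps_coequalises.1. Qed.

Lemma glued_E_coequalised (x x' : hE B) :
  glued_E g1 g2 x x' -> fE eps x = fE eps x'.
Proof. by case=> y [<- <-]; exact: eps_coequalises.2. Qed.

Lemma glued_V_mono_eq (A : hyp Sg) (f : hom A B) (a b : hV A) :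
  mono (Defs.comp f eps) -> glued_V g1 g2 (fV f a) (fV f b) -> a = b.
Proof. by case=> injV _ /glued_V_coequalised; exact: injV. Qed.

Lemma glued_E_mono_eq (A : hyp Sg) (f : hom A B) (a b : hE A) :
  mono (Defs.comp f eps) -> glued_E g1 g2 (fE f a) (fE f b) -> a = b.
Proof. by case=> _ injE /glued_E_coequalised; exact: injE. Qed.

End CoequalisedGluing.

Theorem mainTheorem1 (Sg : signature) (Rs : seq (rule Sg)) (rho1 rho2 : rule Sg)
  (HRs : left_connected_system Rs) (Hin1 : List.In rho1 Rs) (Hin2 : List.In rho2 Rs)
  (G : hyp Sg) (g1 g2 : hom G (coprod (rL rho1) (rL rho2)))
  (S : hyp Sg) (eps : hom (coprod (rL rho1) (rL rho2)) S)
  (Hcoeq : is_coeq g1 g2 eps) :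
  (((exists a b : hV (rL rho1), a <> b /\ glued_V g1 g2 (inl a) (inl b)) \/
    (exists a b : hV (rL rho2), a <> b /\ glued_V g1 g2 (inr a) (inr b))) ->
     ~ yields_precritical eps) /\
  (((exists a b : hE (rL rho1), a <> b /\ glued_E g1 g2 (inl a) (inl b)) \/
    (exists a b : hE (rL rho2), a <> b /\ glued_E g1 g2 (inr a) (inr b))) ->
     ~ yields_precritical eps).
Proof.
have [coeq _] := Hcoeq.
split=> -[] [a [b [neq_ab glued_ab]]] [mono1 mono2 _]; apply: neq_ab.
- exact: (glued_V_mono_eq coeq mono1 glued_ab).
- exact: (glued_V_mono_eq coeq mono2 glued_ab).
- exact: (glued_E_mono_eq coeq mono1 glued_ab).
- exact: (glued_E_mono_eq coeq mono2 glued_ab).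
Qed.
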